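(* Let $p\ge2$ and $n,\ell,t$ be positive integers. Every $t$-tandem-duplication-correcting code $\mathcal{C}\subseteq\mathbb{Z}_p^n$ with respect to duplication length $\ell$ satisfies $$n-\log_p|\mathcal{C}|\ge t\log_p n-t\log_p\bigl(t(p-1)\bigr)-t(\ell+1).$$
   Context: $\mathbb{Z}_p=\{0,1,\dots,p-1\}$. For a word $\mathbf{x}$ over $\mathbb{Z}_p$ and $0\le i\le|\mathbf{x}|-\ell$, write $\mathbf{x}=\mathbf{u}\mathbf{v}\mathbf{w}$ with $|\mathbf{u}|=i$, $|\mathbf{v}|=\ell$; the tandem duplication of length $\ell$ at position $i$ produces $\mathbf{u}\mathbf{v}\mathbf{v}\mathbf{w}$. The ball $B_t^{\tau_\ell}(\mathbf{x})$ is the set of words obtainable from $\mathbf{x}$ by at most $t$ successive tandem duplications of length $\ell$. A code $\mathcal{C}\subseteq\mathbb{Z}_p^n$ is $t$-tandem-duplication-correcting (duplication length $\ell$) if $B_t^{\tau_\ell}(\mathbf{c})\cap B_t^{\tau_\ell}(\mathbf{c}')=\emptyset$ for all distinct $\mathbf{c},\mathbf{c}'\in\mathcal{C}$. *)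

From mathcomp Require Import all_boot.
From Stdlib Require Import Reals.
Set Implicit Arguments. Unset Strict Implicit. Unset Printing Implicit Defensive.

(* tandem duplication of length l at position i: x = u v w, |u| = i, |v| = l,
   result u v v w; defined only when i + l <= |x|. *)
Definition tdup (T : Type) (l i : nat) (x : seq T) : seq T :=
  take (i + l) x ++ drop i x.

Definition tdup_step (T : Type) (l : nat) (x y : seq T) : Prop :=
  exists i, i + l <= size x /\ y = tdup l i x.

Fixpoint tdup_k (T : Type) (l k : nat) (x y : seq T) : Prop :=
  match k with
  | 0 => y = x
  | k'.+1 => exists z, tdup_k l k' x z /\ tdup_step l z y
  end.

Definition tdup_ball (T : Type) (l t : nat) (x : seq T) : seq T -> Prop :=
  fun y => exists k, k <= t /\ tdup_k l k x y.

Definition tdup_correcting (p n l t : nat) (C : {set n.-tuple 'I_p}) : Prop :=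
  forall c c' : n.-tuple 'I_p, c \in C -> c' \in C -> c != c' ->
    forall y : seq 'I_p, ~ (tdup_ball l t (tval c) y /\ tdup_ball l t (tval c') y).

Definition logp (p : nat) (x : R) : R := (ln x / ln (INR p))%R.

(* Record for a word x the positions j with x_j != x_(j+l), i.e. the support
   of its l-step difference vector.  A tandem duplication of length l merely
   inserts l zeros into this vector, so it preserves its weight w, and a word
   of weight w has at least 'C(w + t, t) distinct t-fold descendants, one for
   each way of spreading t blocks of zeros over the w + 1 zero runs.  As the
   balls of a code are disjoint and there are p^l 'C(N, w) (p-1)^w words of
   length l + N and weight w, the number A_w of codewords of weight w
   satisfies A_w 'C(w + t, t) <= p^l 'C(N, w) (p-1)^w, where l + N = n + t l.
   By 'C(N, w) 'C(N + t, t) = 'C(N + t, w + t) 'C(w + t, t) and the binomial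
   theorem, summing over w gives |C| 'C(N + t, t) (p-1)^t <= p^(N + t + l);
   it remains to use n^t <= t^t 'C(N + t, t) and take logarithms. *)

From mathcomp Require Import all_boot.
From Stdlib Require Import Reals Lra.
(* Reals rebinds [^] on nat to [Nat.pow]; re-importing ssrnat restores [expn]. *)
From mathcomp Require Import ssrnat zify ring.
Set Implicit Arguments. Unset Strict Implicit. Unset Printing Implicit Defensive.

Lemma count_take_find (S : Type) (a : pred S) (s : seq S) :
  count a (take (find a s).+1 s) = has a s.
Proof. by elim: s => [|b s IH] //=; case: (a b) => /=; rewrite ?take0. Qed.

Section DifferenceVector.
Variables (T : eqType) (d : T) (l : nat).
Implicit Types x y z : seq T.

Definition diffv (x : seq T) : seq bool :=
  mkseq (fun j => nth d x j != nth d x (j + l)) (size x - l).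

Definition dweight (x : seq T) : nat := count idfun (diffv x).

Lemma size_diffv x : size (diffv x) = size x - l.
Proof. exact: size_mkseq. Qed.

Lemma nth_diffv x j :
  nth false (diffv x) j = (j + l < size x) && (nth d x j != nth d x (j + l)).
Proof.
rewrite /diffv; case: (ltnP j (size x - l)) => hj.
  by rewrite nth_mkseq // (_ : j + l < size x) //; lia.
by rewrite nth_default ?size_mkseq // (_ : j + l < size x = false) //; lia.
Qed.

Lemma diffv_drop k x : diffv (drop k x) = drop k (diffv x).
Proof.
apply: (@eq_from_nth _ false); first by rewrite size_drop !size_diffv size_drop; lia.
move=> j _; rewrite nth_drop !nth_diffv size_drop !nth_drop addnA.
by congr andb; lia.
Qed.

Lemma diffv_take m x : diffv (take (m + l) x) = take m (diffv x).
Proof.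
apply: (@eq_from_nth _ false).
  by rewrite size_take !size_diffv size_take; case: ifP; case: ifP; lia.
move=> j; rewrite size_diffv size_take => hj.
have hjm : j < m by move: hj; case: ifP; lia.
rewrite nth_take // !nth_diffv size_take !nth_take; try lia.
by congr andb; case: ifP; lia.
Qed.

Lemma diffv_rcons x a : 0 < l -> l <= size x ->
  diffv (rcons x a) = rcons (diffv x) (nth d x (size x - l) != a).
Proof.
move=> l_gt0 hx; apply: (@eq_from_nth _ false).
  by rewrite size_rcons !size_diffv size_rcons subSn.
move=> j; rewrite size_diffv size_rcons => hj.
rewrite nth_diffv size_rcons !nth_rcons size_diffv.
repeat case: ifP => ? //; try lia.
  by rewrite nth_diffv; congr andb; lia.
by rewrite (_ : j = size x - l) ?ifT; lia.
Qed.

Lemma size_tdup i x : i + l <= size x -> size (tdup l i x) = size x + l.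
Proof. by move=> h; rewrite /tdup size_cat size_take size_drop; case: ifP; lia. Qed.

Lemma nth_tdup i x k : i + l <= size x ->
  nth d (tdup l i x) k = if k < i + l then nth d x k else nth d x (k - l).
Proof.
move=> h; rewrite /tdup nth_cat size_take.
have -> : (if i + l < size x then i + l else size x) = i + l by case: ifP; lia.
case: ifP => hk; first by rewrite nth_take.
by rewrite nth_drop; congr nth; lia.
Qed.

Lemma diffv_tdup i x : i + l <= size x ->
  diffv (tdup l i x) = take i (diffv x) ++ nseq l false ++ drop i (diffv x).
Proof.
move=> h; apply: (@eq_from_nth _ false).
  rewrite size_diffv size_tdup // !size_cat size_take size_nseq size_drop size_diffv.
  by case: ifP; lia.
move=> j; rewrite size_diffv size_tdup // => hj.
rewrite nth_diffv size_tdup // !nth_tdup // nth_cat size_take size_diffv.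
have -> : (if i < size x - l then i else size x - l) = i by case: ifP; lia.
case: (ltnP j i) => h1.
  rewrite nth_take // nth_diffv.
  by repeat case: ifP => ? //; try lia.
rewrite nth_cat size_nseq nth_nseq addnK.
repeat case: ifP => ? //; try lia.
  by rewrite eqxx andbF.
by rewrite nth_drop nth_diffv (_ : i + (j - i - l) = j - l) ?subnK ?ltn_add2r //; lia.
Qed.

Lemma dweight_tdup i x : i + l <= size x -> dweight (tdup l i x) = dweight x.
Proof.
move=> h; rewrite /dweight diffv_tdup // !count_cat count_nseq mul0n add0n.
by rewrite -count_cat cat_take_drop.
Qed.

Lemma find_diffv_tdup i x : i + l <= size x ->
  find idfun (diffv x) <= find idfun (diffv (tdup l i x)).
Proof.
move=> h; rewrite diffv_tdup // -{1}(cat_take_drop i (diffv x)) !find_cat.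
by rewrite has_nseq andbF size_nseq; case: ifP => // _; rewrite leq_add2l leq_addl.
Qed.

Lemma tdup_k_cons k x z y :
  tdup_step l x z -> tdup_k l k z y -> tdup_k l k.+1 x y.
Proof.
move=> hxz; elim: k y => [|k IH] y /=; first by move->; exists x.
by case=> u [/IH hxu hu]; exists u.
Qed.

Lemma size_tdup_k k x y : tdup_k l k x y -> size y = size x + k * l.
Proof.
elim: k y => [|k IH] y /=; first by move->; rewrite addn0.
by case=> z [/IH hz [i [hi ->]]]; rewrite size_tdup // hz mulSn; lia.
Qed.

Lemma dweight_tdup_k k x y : tdup_k l k x y -> dweight y = dweight x.
Proof.
elim: k y => [|k IH] y /=; first by move->.
by case=> z [/IH hz [i [hi ->]]]; rewrite dweight_tdup.
Qed.

Lemma find_diffv_tdup_k k x y : tdup_k l k x y ->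
  find idfun (diffv x) <= find idfun (diffv y).
Proof.
elim: k y => [|k IH] y /=; first by move->.
by case=> z [/IH hz [i [hi ->]]]; apply: leq_trans hz (find_diffv_tdup hi).
Qed.

Lemma take_tdup_k k x y : tdup_k l k x y -> take l y = take l x.
Proof.
elim: k y => [|k IH] y /=; first by move->.
case=> z [/IH hz [i [hi ->]]]; rewrite /tdup takel_cat ?take_takel ?hz //.
  by rewrite leq_addl.
by rewrite size_take; case: ifP; lia.
Qed.

Lemma tdup_k_catl k a x y : tdup_k l k x y -> tdup_k l k (a ++ x) (a ++ y).
Proof.
elim: k y => [|k IH] y /=; first by move->.
case=> z [/IH hz [i [hi ->]]]; exists (a ++ z); split => //.
exists (size a + i); split; first by rewrite size_cat -addnA leq_add2l.
rewrite /tdup take_cat drop_cat !ifN -?leqNgt -?addnA ?leq_addr //.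
by rewrite !addKn catA.
Qed.

Section FirstOne.
Variable x : seq T.
Hypothesis dweight_gt0 : 0 < dweight x.
Let i := find idfun (diffv x).

Lemma has_diffv : has idfun (diffv x).
Proof. by rewrite has_count. Qed.

Lemma nth_find_diffv : nth false (diffv x) i.
Proof. exact: (nth_find false has_diffv). Qed.

Lemma find_diffv_lt_size : i + l < size x.
Proof. by have := nth_find_diffv; rewrite nth_diffv => /andP[]. Qed.

Lemma dweight_drop_find : dweight (drop i.+1 x) = (dweight x).-1.
Proof.
rewrite /dweight -(cat_take_drop i.+1 (diffv x)) count_cat diffv_drop.
by rewrite count_take_find has_diffv.
Qed.

End FirstOne.

(* For x of weight w, [descendants w t x] lists the words obtained by
   distributing t duplications at the starts of the w + 1 zero runs of
   [diffv x]: either the first run gets no further block (keep x up to its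
   first 1 and recurse on the rest), or it gets one more (duplicate at 0). *)
Fixpoint descendants (w : nat) : nat -> seq T -> seq (seq T) :=
  match w with
  | 0 => fun t x => [:: iter t (tdup l 0) x]
  | w'.+1 => fix descendants_t t x :=
      match t with
      | 0 => [:: x]
      | t'.+1 =>
          let i := (find idfun (diffv x)).+1 in
          [seq take i x ++ y | y <- descendants w' t (drop i x)]
            ++ descendants_t t' (tdup l 0 x)
      end
  end.

Lemma size_descendants w t x : size (descendants w t x) = 'C(w + t, t).
Proof.
elim: w t x => [|w IHw] t x; first by rewrite add0n binn.
elim: t x => [|t IHt] x /=; first by rewrite bin0.
by rewrite size_cat size_map IHw IHt !addSn !addnS binS.
Qed.

Lemma descendants_tdup_k w t x y : dweight x = w -> l <= size x ->
  y \in descendants w t x -> tdup_k l t x y.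
Proof.
elim: w t x y => [|w IHw] t x y hw hx.
  rewrite inE => /eqP ->; elim: t => [|t IH] //=.
  exists (iter t (tdup l 0) x); split => //; exists 0; split => //.
  by rewrite (size_tdup_k IH); lia.
elim: t x y hw hx => [|t IHt] x y hw hx; first by rewrite inE => /eqP ->.
have hw0 : 0 < dweight x by rewrite hw.
have hlt := find_diffv_lt_size hw0.
set i := (find idfun (diffv x)).+1.
rewrite /= mem_cat => /orP[/mapP[y' hy' ->] | hy].
  have hy'' : tdup_k l t.+1 (drop i x) y'.
    by apply: IHw hy'; rewrite ?dweight_drop_find ?hw ?size_drop //; lia.
  by have := tdup_k_catl (take i x) hy''; rewrite cat_take_drop.
apply: (@tdup_k_cons _ _ (tdup l 0 x)); first by exists 0.
by apply: IHt hy; rewrite ?dweight_tdup ?size_tdup //; lia.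
Qed.

Lemma find_diffv_tdup0 x : l <= size x ->
  find idfun (diffv (tdup l 0 x)) = l + find idfun (diffv x).
Proof.
by move=> hx; rewrite diffv_tdup // take0 drop0 cat0s find_cat has_nseq andbF size_nseq.
Qed.

Lemma uniq_descendants w t x : 0 < l -> dweight x = w -> l <= size x ->
  uniq (descendants w t x).
Proof.
move=> l_gt0; elim: w t x => [|w IHw] t x hw hx //.
elim: t x hw hx => [|t IHt] x hw hx //.
have hw0 : 0 < dweight x by rewrite hw.
have hlt := find_diffv_lt_size hw0.
rewrite /= cat_uniq; set i := find idfun (diffv x) in hlt *.
have size_take_x : size (take i.+1 x) = i.+1 by rewrite size_takel //; lia.
apply/and3P; split.
- rewrite map_inj_uniq; last first.
    by move=> u v /(congr1 (drop i.+1)); rewrite !drop_size_cat.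
  by apply: IHw; rewrite ?dweight_drop_find ?hw ?size_drop //; lia.
- (* A word of the first part has its first 1 at position i, one of the
     second part at position l + i or later. *)
  apply/hasPn => y hy; apply/mapP => -[y1 hy1 Ey].
  have hxy1 : tdup_k l t.+1 (drop i.+1 x) y1.
    by apply: descendants_tdup_k hy1; rewrite ?dweight_drop_find ?hw ?size_drop //; lia.
  have hxy : tdup_k l t (tdup l 0 x) y.
    by apply: (@descendants_tdup_k w.+1) => //; rewrite ?dweight_tdup ?size_tdup //; lia.
  have prefix_y1 : take (i.+1 + l) (take i.+1 x ++ y1) = take (i.+1 + l) x.
    by rewrite !takeD take_size_cat // drop_size_cat // (take_tdup_k hxy1).
  have : find idfun (diffv (take i.+1 x ++ y1)) < i.+1.
    apply: find_ltn; rewrite -diffv_take prefix_y1 diffv_take.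
    by rewrite has_take ?has_diffv.
  have := find_diffv_tdup_k hxy; rewrite Ey find_diffv_tdup0 //; lia.
- by apply: (IHt (tdup l 0 x)); rewrite ?dweight_tdup ?size_tdup //; lia.
Qed.

End DifferenceVector.

Section Words.
Variables (T : finType) (d : T) (l : nat).
Hypothesis l_gt0 : 0 < l.
Implicit Types x y : seq T.

Fixpoint words m : seq (seq T) :=
  if m is m'.+1 then [seq rcons x a | x <- words m', a <- enum T] else [:: [::]].

Lemma mem_words m x : (x \in words m) = (size x == m).
Proof.
elim: m x => [|m IH] x /=; first by rewrite inE; case: x.
apply/allpairsP/idP => [[[x' a] /= [hx' _ ->]] | ].
  by rewrite size_rcons eqSS -IH.
case/lastP: x => [|x' a] //; rewrite size_rcons eqSS -IH => hx'.
by exists (x', a); rewrite mem_enum.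
Qed.

Lemma size_words m : size (words m) = #|T| ^ m.
Proof. by elim: m => [|m IH] //=; rewrite size_allpairs IH expnS -cardE mulnC. Qed.

Lemma count_enum_card (a : pred T) : count a (enum T) = #|a|.
Proof. by rewrite cardE -size_filter /enum_mem -enumT /= filter_predT. Qed.

Lemma count_enum_rcons_dweight x w : l <= size x ->
  count (fun a => dweight d l (rcons x a) == w) (enum T)
  = (dweight d l x == w) + #|T|.-1 * ((dweight d l x).+1 == w).
Proof.
move=> hx; set c := nth d x (size x - l); set v := dweight d l x.
rewrite (eq_count (a2 := fun a => v + (c != a) == w)); last first.
  by move=> a; rewrite /dweight diffv_rcons // -cats1 count_cat /= addn0.
rewrite count_enum_card.
have [<-|hvw] := eqVneq v w.
  rewrite gtn_eqF // muln0 addn0 -[true : nat](card1 c); apply: eq_card => a.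
  rewrite -topredE /= inE [a == c]eq_sym.
  by have [_|_] := eqVneq c a; rewrite /= ?addn0 ?addn1 ?eqxx ?gtn_eqF.
have [<-|hv1w] := eqVneq v.+1 w.
  rewrite muln1 add0n -(cardC1 c); apply: eq_card => a.
  rewrite -topredE /= inE [a == c]eq_sym.
  by have [_|_] := eqVneq c a; rewrite /= ?addn0 ?addn1 ?eqxx ?ltn_eqF.
rewrite [RHS]/= muln0 addn0 -(card0 T); apply: eq_card => a.
by rewrite -topredE /= inE; case: (c != a); rewrite ?addn0 ?addn1 ?(negbTE hvw) ?(negbTE hv1w).
Qed.

Lemma count_words_dweight_succ m w : l <= m ->
  count (fun y => dweight d l y == w) (words m.+1)
  = count (fun y => dweight d l y == w) (words m)
    + #|T|.-1 * count (fun y => (dweight d l y).+1 == w) (words m).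
Proof.
move=> lm /=; have : {in words m, forall x, l <= size x}.
  by move=> x; rewrite mem_words => /eqP->.
elim: (words m) => [|x s IH] hs /=; first by rewrite muln0.
rewrite count_cat count_map count_enum_rcons_dweight ?hs ?mem_head //.
rewrite IH => [|y hy]; last exact/hs/mem_behead.
by rewrite mulnDr addnACA.
Qed.

Lemma count_words_dweight k w :
  count (fun y => dweight d l y == w) (words (l + k)) = #|T| ^ l * 'C(k, w) * #|T|.-1 ^ w.
Proof.
elim: k w => [|k IH] w.
  rewrite addn0 (@eq_in_count _ _ (fun _ => w == 0)); last first.
    by move=> y; rewrite mem_words /dweight /diffv => /eqP->; rewrite subnn /= eq_sym.
  case: w => [|w]; first by rewrite eqxx count_predT size_words bin0 expn0 !muln1.
  by rewrite (@eq_count _ _ pred0) // count_pred0 bin0n muln0 mul0n.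
rewrite addnS count_words_dweight_succ ?leq_addr // IH.
case: w => [|w]; first by rewrite (@eq_count _ _ pred0) // count_pred0 !bin0 muln0 addn0.
rewrite (@eq_count _ _ (fun y => dweight d l y == w)) // IH binS expnS.
by rewrite mulnDr mulnDl [in X in _ + X = _]mulnCA.
Qed.

End Words.

Lemma size_sum_count (S : Type) (g : S -> nat) K (s : seq S) :
  all (fun x => g x < K) s -> size s = \sum_(w < K) count (fun x => g x == w) s.
Proof.
elim: s => [|x s IH] /=; first by rewrite big1.
move=> /andP[hx /IH->]; rewrite big_split /= [X in _ = X + _](bigD1 (Ordinal hx)) //=.
rewrite eqxx [X in _ + X + _]big1 // => w hw; apply/eqP; rewrite eqb0.
by apply: contra hw => /eqP ew; apply/eqP/val_inj.
Qed.

Lemma mul_bin_shift N w t :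
  'C(N, w) * 'C(N + t, t) = 'C(N + t, w + t) * 'C(w + t, t).
Proof.
have [hw|hw] := leqP w N; last first.
  by rewrite (bin_small hw) (@bin_small (N + t) (w + t)) ?mul0n // ltn_add2r.
apply/eqP; rewrite -(eqn_pmul2r (_ : 0 < t`! * w`! * (N - w)`!)); last first.
  by rewrite !muln_gt0 !fact_gt0.
have e1 := bin_fact hw.
have e2 := bin_fact (leq_addl N t); rewrite addnK in e2.
have e3 := bin_fact (_ : w + t <= N + t); rewrite subnDr leq_add2r in e3.
have e4 := bin_fact (leq_addl w t); rewrite addnK in e4.
apply/eqP; transitivity ((N + t)`!).
  by rewrite -e2 -e1; lia.
by rewrite -(e3 hw) -e4; lia.
Qed.

Lemma sum_ord_addr_le (F : nat -> nat) N t :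
  \sum_(w < N.+1) F (w + t) <= \sum_(k < (N + t).+1) F k.
Proof.
rewrite -(big_mkord xpredT (fun w => F (w + t))) -(big_mkord xpredT F).
rewrite [X in _ <= X](big_cat_nat (leq0n t)) ?leqW ?leq_addl //= -{3}[t]add0n big_addn.
by rewrite subSn ?leq_addl // addnK leq_addl.
Qed.

Definition tdup_disjoint (T : eqType) (l t : nat) (cs : seq (seq T)) : Prop :=
  forall c c' y, c \in cs -> c' \in cs -> c != c' ->
    tdup_k l t c y -> tdup_k l t c' y -> False.

Section CodeBound.
Variables (T : finType) (d : T) (l m t : nat) (cs : seq (seq T)).
Hypothesis l_gt0 : 0 < l.
Hypothesis uniq_cs : uniq cs.
Hypothesis size_cs : {in cs, forall c, size c = l + m}.
Hypothesis disjoint_cs : tdup_disjoint l t cs.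

Lemma count_dweight_code_le w :
  count (fun c => dweight d l c == w) cs * 'C(w + t, t)
  <= #|T| ^ l * 'C(m + t * l, w) * #|T|.-1 ^ w.
Proof.
set sw := [seq c <- cs | dweight d l c == w].
have sw_cs c : c \in sw -> [/\ c \in cs, dweight d l c = w & l <= size c].
  by rewrite mem_filter => /andP[/eqP hw hc]; rewrite size_cs ?leq_addr.
set ys := [seq y | c <- sw, y <- descendants d l w t c].
have ys_tdup c y : c \in sw -> y \in descendants d l w t c -> tdup_k l t c y.
  by move=> /sw_cs[_ hw hc]; apply: descendants_tdup_k.
have -> : count (fun c => dweight d l c == w) cs * 'C(w + t, t) = size ys.
  rewrite size_allpairs_dep (eq_in_map _ (fun _ => 'C(w + t, t)) sw).1; last first.
    by move=> c _; rewrite size_descendants.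
  have -> : [seq 'C(w + t, t) | _ <- sw] = nseq (size sw) 'C(w + t, t).
    by elim: (sw) => //= c s ->.
  by rewrite sumn_nseq size_filter mulnC.
rewrite -(count_words_dweight d l_gt0) -size_filter; apply: uniq_leq_size.
  apply: allpairs_uniq_dep; first by rewrite filter_uniq.
    by move=> c /sw_cs[_ hw hc]; apply: uniq_descendants.
  move=> [c y] [c' y'] /allpairsPdep[c1 [y1 [hc1 hy1 [-> ->]]]].
  move=> /allpairsPdep[c2 [y2 [hc2 hy2 [-> ->]]]] /= Ey; subst y2.
  have [->//|ne] := eqVneq c1 c2.
  have [[hcs1 _ _] [hcs2 _ _]] := (sw_cs _ hc1, sw_cs _ hc2).
  by case: (disjoint_cs hcs1 hcs2 ne (ys_tdup _ _ hc1 hy1) (ys_tdup _ _ hc2 hy2)).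
move=> y /allpairsPdep[c [{}y [hc hy ->]]].
have hk := ys_tdup _ _ hc hy; have [hcs hw _] := sw_cs _ hc.
rewrite mem_filter mem_words (dweight_tdup_k d hk) hw eqxx (size_tdup_k hk) size_cs //.
by rewrite addnA eqxx.
Qed.

Lemma code_size_bin_le :
  size cs * 'C(m + t * l + t, t) * #|T|.-1 ^ t <= #|T| ^ (l + (m + t * l + t)).
Proof.
set N := m + t * l; set q := #|T|.-1.
have card_T : #|T| = 1 + q by rewrite add1n prednK //; apply/card_gt0P; exists d.
have dweight_cs : all (fun c => dweight d l c < N.+1) cs.
  apply/allP => c hc; rewrite ltnS (leq_trans (count_size _ _)) //.
  by rewrite size_diffv size_cs // addKn leq_addr.
rewrite (size_sum_count dweight_cs) !big_distrl /=.
apply: (@leq_trans (\sum_(w < N.+1) #|T| ^ l * ('C(N + t, w + t) * q ^ (w + t)))).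
  apply: leq_sum => w _; set A := count _ cs.
  rewrite -(@leq_pmul2r 'C(w + t, t)) ?bin_gt0 ?leq_addl //.
  have -> : #|T| ^ l * ('C(N + t, w + t) * q ^ (w + t)) * 'C(w + t, t)
          = #|T| ^ l * 'C(N, w) * q ^ w * ('C(N + t, t) * q ^ t).
    transitivity (#|T| ^ l * ('C(N + t, w + t) * 'C(w + t, t)) * q ^ (w + t)).
      by ring.
    by rewrite -mul_bin_shift expnD; ring.
  have -> : A * 'C(N + t, t) * q ^ t * 'C(w + t, t)
          = A * 'C(w + t, t) * ('C(N + t, t) * q ^ t) by ring.
  by rewrite leq_mul2r count_dweight_code_le orbT.
rewrite -big_distrr /= expnD leq_mul2l; apply/orP; right.
apply: leq_trans (sum_ord_addr_le (fun k => 'C(N + t, k) * q ^ k) N t) _.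
by rewrite card_T expnDn; apply: eq_leq; apply: eq_bigr => k _; rewrite exp1n mul1n.
Qed.

End CodeBound.

Lemma expn_le_bin n t : n ^ t <= t ^ t * 'C(n + t, t).
Proof.
elim: t => [|t IH]; first by rewrite bin0.
have e : t.+1 * 'C(n + t.+1, t.+1) = (n + t).+1 * 'C(n + t, t).
  by rewrite -mul_bin_diag addnS.
rewrite expnS [t.+1 ^ t.+1]expnS [t.+1 * _]mulnC -mulnA e.
have h1 : t ^ t <= t.+1 ^ t by case: (posnP t) => [->|ht] //; rewrite leq_exp2r.
apply: (leq_trans (leq_mul (leqnn n) IH)).
rewrite mulnCA; apply: leq_mul => //.
apply: leq_mul => //; lia.
Qed.

Lemma code_size_le (T : finType) (l n t : nat) (cs : seq (seq T)) :
  0 < l -> 0 < t -> 1 < #|T| -> uniq cs -> {in cs, forall c, size c = n} ->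
  tdup_disjoint l t cs ->
  size cs * (n * #|T|.-1) ^ t <= #|T| ^ (n + t * (l + 1)) * t ^ t.
Proof.
move=> l_gt0 t_gt0 card_gt1 uniq_cs size_cs disjoint_cs.
have [d _] := card_gt0P (ltnW card_gt1).
have q_lt : #|T|.-1 < #|T| by rewrite ltn_predL (ltnW card_gt1).
have tt_gt0 : 0 < t ^ t by rewrite expn_gt0 t_gt0.
have [ln|nl] := leqP l n; last first.
  have cs_le : size cs <= #|T| ^ n.
    rewrite -(size_words T n) uniq_leq_size // => c hc.
    by rewrite mem_words size_cs.
  have nq_le : n * #|T|.-1 <= #|T| ^ (l + 1).
    rewrite expnD expn1 leq_mul ?(ltnW q_lt) //.
    exact: leq_trans (ltnW nl) (ltnW (ltn_expl _ card_gt1)).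
  rewrite expnD -mulnA leq_mul // [t * _]mulnC expnM -[(n * _) ^ t]muln1.
  by rewrite leq_mul // leq_exp2r.
have [m En] : exists m, n = l + m by exists (n - l); rewrite subnKC.
rewrite {n ln}En in size_cs *.
have hbin := code_size_bin_le d l_gt0 uniq_cs size_cs disjoint_cs.
have lm_le : l + m <= m + t * l by rewrite addnC leq_add2l leq_pmull.
have pow_le : (l + m) ^ t <= t ^ t * 'C(m + t * l + t, t).
  apply: leq_trans (expn_le_bin _ _) _; rewrite leq_mul2l leq_bin2l ?orbT //.
  by rewrite leq_add2r.
apply: (@leq_trans (t ^ t * (size cs * 'C(m + t * l + t, t) * #|T|.-1 ^ t))).
  rewrite expnMn (_ : t ^ t * _ = size cs * (t ^ t * 'C(m + t * l + t, t)) * #|T|.-1 ^ t).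
    by rewrite mulnA leq_mul2r leq_mul2l pow_le !orbT.
  by ring.
rewrite mulnC leq_mul2r (_ : l + m + t * (l + 1) = l + (m + t * l + t)) ?hbin ?orbT //.
by ring.
Qed.

Lemma ln_INR_mul a b : 0 < a -> 0 < b ->
  ln (INR (a * b)) = (ln (INR a) + ln (INR b))%R.
Proof. by move=> /ltP ha /ltP hb; rewrite mult_INR ln_mult //; apply: lt_0_INR. Qed.

Lemma INR_expn a k : INR (a ^ k) = (INR a ^ k)%R.
Proof. by elim: k => [|k IH] //; rewrite expnS mult_INR IH. Qed.

Lemma ln_INR_exp a k : 0 < a -> ln (INR (a ^ k)) = (INR k * ln (INR a))%R.
Proof. by move=> /ltP ha; rewrite INR_expn ln_pow //; apply: lt_0_INR. Qed.

Lemma ln_INR_le a b : 0 < a -> a <= b -> (ln (INR a) <= ln (INR b))%R.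
Proof.
move=> /ltP ha /leP /le_INR hab; have ha' := lt_0_INR _ ha.
by case: (Rle_lt_or_eq_dec _ _ hab) => [/(ln_increasing _ _ ha')|->]; lra.
Qed.

Lemma logp_bound (p n l t A : nat) : 1 < p -> 0 < n -> 0 < t -> 0 < A ->
  A * (n * (p - 1)) ^ t <= p ^ (n + t * (l + 1)) * t ^ t ->
  (INR n - logp p (INR A) >=
   INR t * logp p (INR n) - INR t * logp p (INR (t * (p - 1)))
   - INR t * INR (l + 1))%R.
Proof.
move=> hp hn ht hA hle.
have hp0 : 0 < p by apply: ltnW.
have hq : 0 < p - 1 by rewrite subn_gt0.
have hnq : 0 < n * (p - 1) by rewrite muln_gt0 hn.
have hX : 0 < (n * (p - 1)) ^ t by rewrite expn_gt0 hnq.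
have hpM : 0 < p ^ (n + t * (l + 1)) by rewrite expn_gt0 hp0.
have htt : 0 < t ^ t by rewrite expn_gt0 ht.
have hlhs : 0 < A * (n * (p - 1)) ^ t by rewrite muln_gt0 hA.
have := ln_INR_le hlhs hle.
rewrite !ln_INR_mul // !ln_INR_exp // ln_INR_mul // plus_INR mult_INR.
have lnp : (0 < ln (INR p))%R.
  by rewrite -ln_1; apply: ln_increasing; [lra | apply: lt_1_INR; apply/ltP].
have lnq : (0 <= INR t * ln (INR (p - 1)))%R.
  by apply: Rmult_le_pos; [apply: pos_INR | rewrite -ln_1 -INR_1; apply: ln_INR_le].
rewrite /logp ln_INR_mul // => hln; apply: Rle_ge.
by apply: (Rmult_le_reg_r _ _ _ lnp); field_simplify; lra.
Qed.

Lemma correcting_tdup_disjoint p n l t (C : {set n.-tuple 'I_p}) :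
  tdup_correcting l t C -> tdup_disjoint l t [seq val c | c <- enum C].
Proof.
move=> hC _ _ y /mapP[c hc ->] /mapP[c' hc' ->] ne hy hy'.
rewrite !mem_enum in hc hc'.
apply: (hC c c' hc hc' _ y); first by apply: contraNneq ne => ->.
by split; exists t.
Qed.

Theorem lemma2 (p n l t : nat) (C : {set n.-tuple 'I_p}) :
  2 <= p -> 0 < n -> 0 < l -> 0 < t ->
  0 < #|C| -> tdup_correcting l t C ->
  (INR n - logp p (INR #|C|) >=
   INR t * logp p (INR n) - INR t * logp p (INR (t * (p - 1)))
   - INR t * INR (l + 1))%R.
Proof.
move=> p_gt1 n_gt0 l_gt0 t_gt0 C_gt0 hC; apply: logp_bound => //.
have := code_size_le l_gt0 t_gt0 _ _ _ (correcting_tdup_disjoint hC).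
rewrite size_map -cardE card_ord subn1; apply => //.
- by rewrite map_inj_uniq ?enum_uniq //; apply: val_inj.
- by move=> _ /mapP[c _ ->]; rewrite size_tuple.
Qed.
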